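(* Let $\gamma>0$, $\mu_1,\mu_2>0$, and let $\tilde G^1_{\gamma,\mu_1}$ and $\tilde G^2_{-\gamma,\mu_2}$ be independent. Then for every $t>0$, $\tilde G^1_{\gamma,\mu_1}(\tilde G^2_{-\gamma,\mu_2}(t))$ has density $$q(x,t)=\gamma\,\frac{x^{\gamma\mu_1-1}t^{\gamma\mu_2}}{(x^\gamma+t^\gamma)^{\mu_1+\mu_2}}\,\frac{\Gamma(\mu_1+\mu_2)}{\Gamma(\mu_1)\Gamma(\mu_2)},\qquad x>0,$$ and $\tilde G^1_{\gamma,\mu_1}(\tilde G^2_{-\gamma,\mu_2}(t))$ has the same distribution as $\tilde G^1_{\gamma,\mu_1}(t^{1/2})\,\tilde G^2_{-\gamma,\mu_2}(t^{1/2})$. Moreover, when $\mu_1=\mu_2=\mu$, $\tilde G^1_{-\gamma,\mu}(\tilde G^2_{\gamma,\mu}(t))$ has the same distribution as $\tilde G^1_{\gamma,\mu}(\tilde G^2_{-\gamma,\mu}(t))$ for every $t>0$.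
   Context: For $\gamma>0,\mu>0$: $\tilde G_{\gamma,\mu}(t)$ is a positive process whose value at time $t$ has density $\gamma (x/t)^{\mu\gamma-1}e^{-(x/t)^{\gamma}}/(t\Gamma(\mu))$, $x>0$; $\tilde G_{-\gamma,\mu}(t)$ is a positive process whose value at time $t$ has density $\gamma (x/t)^{-\mu\gamma-1}e^{-(x/t)^{-\gamma}}/(t\Gamma(\mu))$, $x>0$. Composition of independent processes: if $X$ has marginal densities $f_X(x,s)$ and $Y\ge0$ is independent with marginal densities $f_Y(s,t)$, then $X(Y(t))$ has density $\int_0^\infty f_X(x,s)f_Y(s,t)\,ds$. *)

From Stdlib Require Import Reals Lra ClassicalEpsilon.
Open Scope R_scope.

Definition improper_integral (f : R -> R) (l : R) : Prop :=
  (forall a b : R, 0 < a -> a <= b -> inhabited (Riemann_integrable f a b)) /\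
  (forall eps : R, 0 < eps ->
     exists d : R, 0 < d /\ exists M : R, 0 < M /\
       forall (a b : R) (pr : Riemann_integrable f a b),
         0 < a -> a < d -> M < b -> Rabs (RiemannInt pr - l) < eps).

Definition Gamma (mu : R) : R :=
  epsilon (inhabits 0)
    (improper_integral (fun s => Rpower s (mu - 1) * exp (- s))).

(* density at x > 0 of G~_{gamma,mu}(t), gamma > 0 *)
Definition Gdens (gamma mu x t : R) : R :=
  gamma * Rpower (x / t) (mu * gamma - 1) * exp (- Rpower (x / t) gamma)
  / (t * Gamma mu).

(* density at x > 0 of G~_{-gamma,mu}(t), gamma > 0 *)
Definition Gdens_neg (gamma mu x t : R) : R :=
  gamma * Rpower (x / t) (- mu * gamma - 1) * exp (- Rpower (x / t) (- gamma))
  / (t * Gamma mu).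

Definition q_dens (gamma mu1 mu2 x t : R) : R :=
  gamma * (Rpower x (gamma * mu1 - 1) * Rpower t (gamma * mu2)
           / Rpower (Rpower x gamma + Rpower t gamma) (mu1 + mu2))
  * (Gamma (mu1 + mu2) / (Gamma mu1 * Gamma mu2)).

(* Substituting u = c s^p turns each mixing integral into a constant multiple of
   the Gamma integral of order mu1 + mu2: for the composition c = x^gamma + t^gamma
   and p = -gamma, for the product at time sqrt t the scale c acquires the factor
   t^(-gamma/2), and for the reversed composition p = gamma.  The constant left in
   front is exactly the Beta-type factor of q(x,t).  The Gamma integral itself
   exists because its integrand is positive and its integrals over [a, b] are
   bounded by 1/mu + (mu+1)^(mu+1), splitting at 1. *)

From Stdlib Require Import Reals Lra Classical ClassicalEpsilon.
From Coquelicot Require Import Coquelicot.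
Open Scope R_scope.

(* [d <= M] guarantees [a <= b] for every admissible pair of bounds. *)
Definition improper_RInt (f : R -> R) (l : R) : Prop :=
  (forall a b, 0 < a -> a <= b -> ex_RInt f a b) /\
  (forall eps, 0 < eps -> exists d, 0 < d /\ exists M, d <= M /\
     forall a b, 0 < a -> a < d -> M < b -> Rabs (RInt f a b - l) < eps).

Lemma improper_integralE f l : improper_integral f l <-> improper_RInt f l.
Proof.
split; intros [Hex Hlim]; split.
- intros a b Ha Hab; destruct (Hex a b Ha Hab) as [pr]; exact (ex_RInt_Reals_1 _ _ _ pr).
- intros eps Heps; destruct (Hlim eps Heps) as [d [Hd [M [HM H]]]].
  exists (Rmin d 1); split; [apply Rmin_glb_lt; lra|].
  exists (Rmax M 1); split; [pose proof (Rmin_r d 1); pose proof (Rmax_r M 1); lra|].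
  intros a b Ha Had HMb.
  pose proof (Rmin_l d 1); pose proof (Rmin_r d 1).
  pose proof (Rmax_l M 1); pose proof (Rmax_r M 1).
  destruct (Hex a b Ha ltac:(lra)) as [pr].
  rewrite (RInt_Reals f a b pr); apply H; lra.
- intros a b Ha Hab; constructor; exact (ex_RInt_Reals_0 _ _ _ (Hex a b Ha Hab)).
- intros eps Heps; destruct (Hlim eps Heps) as [d [Hd [M [HM H]]]].
  exists d; split; [exact Hd|]; exists M; split; [lra|].
  intros a b pr Ha Had HMb; rewrite <- (RInt_Reals f a b pr); auto.
Qed.

Lemma improper_RInt_ext f g l :
  (forall s, 0 < s -> f s = g s) -> improper_RInt f l -> improper_RInt g l.
Proof.
intros Efg [Hex Hlim].
assert (E : forall a b, 0 < a -> a <= b -> forall s, Rmin a b < s < Rmax a b -> f s = g s).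
{ intros a b Ha Hab s Hs; apply Efg; rewrite Rmin_left in Hs; lra. }
split.
- intros a b Ha Hab; exact (ex_RInt_ext f g a b (E a b Ha Hab) (Hex a b Ha Hab)).
- intros eps Heps; destruct (Hlim eps Heps) as [d [Hd [M [HM H]]]].
  exists d; split; [exact Hd|]; exists M; split; [exact HM|].
  intros a b Ha Had HMb; rewrite <- (RInt_ext f g a b (E a b Ha ltac:(lra))); auto.
Qed.

Lemma improper_RInt_scal f l k : improper_RInt f l -> improper_RInt (fun s => k * f s) (k * l).
Proof.
intros [Hex Hlim]; split.
- intros a b Ha Hab; exact (ex_RInt_scal f a b k (Hex a b Ha Hab)).
- intros eps Heps.
  assert (Hk : 0 < Rabs k + 1) by (pose proof (Rabs_pos k); lra).
  destruct (Hlim (eps / (Rabs k + 1))) as [d [Hd [M [HM H]]]]; [apply Rdiv_lt_0_compat; lra|].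
  exists d; split; [exact Hd|]; exists M; split; [exact HM|].
  intros a b Ha Had HMb.
  replace (RInt (fun s => k * f s) a b) with (k * RInt f a b)
    by (symmetry; exact (RInt_scal f a b k (Hex a b Ha ltac:(lra)))).
  replace (k * RInt f a b - k * l) with (k * (RInt f a b - l)) by ring.
  rewrite Rabs_mult.
  specialize (H a b Ha Had HMb); apply Rlt_div_r in H; [|lra].
  pose proof (Rabs_pos (RInt f a b - l)); nra.
Qed.

Lemma ex_RInt_continuous_pos (f : R -> R) a b :
  (forall u, 0 < u -> continuous f u) -> 0 < a -> 0 < b -> ex_RInt f a b.
Proof.
intros Hf Ha Hb; apply (ex_RInt_continuous (V:=R_CompleteNormedModule)).
intros u Hu; apply Hf.
apply Rlt_le_trans with (Rmin a b); [apply Rmin_glb_lt|apply Hu]; assumption.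
Qed.

Section NonnegativeImproperIntegral.

Variable f : R -> R.
Hypothesis f_cont : forall u, 0 < u -> continuous f u.
Hypothesis f_ge0 : forall u, 0 < u -> 0 <= f u.

Lemma RInt_ge0_pos a b : 0 < a -> a <= b -> 0 <= RInt f a b.
Proof.
intros Ha Hab; apply RInt_ge_0; [exact Hab|apply ex_RInt_continuous_pos; [exact f_cont|lra|lra]|].
intros u Hu; apply f_ge0; lra.
Qed.

Lemma RInt_le_superinterval a b a' b' :
  0 < a' -> a' <= a -> a <= b -> b <= b' -> RInt f a b <= RInt f a' b'.
Proof.
intros Ha' Ha'a Hab Hbb'.
assert (Hex : forall u v, 0 < u -> 0 < v -> ex_RInt f u v).
{ intros u v Hu Hv; exact (ex_RInt_continuous_pos f u v f_cont Hu Hv). }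
rewrite <- (RInt_Chasles f a' a b') by (apply Hex; lra).
rewrite <- (RInt_Chasles f a b b') by (apply Hex; lra).
pose proof (RInt_ge0_pos a' a Ha' Ha'a); pose proof (RInt_ge0_pos b b' ltac:(lra) Hbb').
change plus with Rplus; lra.
Qed.

Lemma improper_RInt_bounded B :
  (forall a b, 0 < a -> a <= b -> RInt f a b <= B) -> exists l, improper_RInt f l.
Proof.
intros HB.
set (E := fun y => exists a b, 0 < a /\ a <= b /\ y = RInt f a b).
assert (Hub : bound E) by (exists B; intros y (a & b & Ha & Hab & ->); auto).
assert (Hne : exists y, E y) by (exists (RInt f 1 1), 1, 1; repeat split; lra).
destruct (completeness E Hub Hne) as [l [Hl Hlub]].
exists l; split.
- intros a b Ha Hab; apply ex_RInt_continuous_pos; [exact f_cont|lra|lra].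
- intros eps Heps.
  assert (Hsup : exists y, E y /\ l - eps < y).
  { apply NNPP; intros Hnot.
    enough (l <= l - eps) by lra.
    apply Hlub; intros y Ey; apply Rnot_lt_le; intros Hlt; apply Hnot; exists y; auto. }
  destruct Hsup as [y [(a0 & b0 & Ha0 & Hab0 & ->) Hy]].
  exists a0; split; [exact Ha0|]; exists b0; split; [exact Hab0|].
  intros a b Ha Ha0' Hb0'.
  pose proof (RInt_le_superinterval a0 b0 a b Ha ltac:(lra) Hab0 ltac:(lra)).
  assert (RInt f a b <= l) by (apply Hl; exists a, b; repeat split; lra).
  rewrite Rabs_left1; lra.
Qed.

End NonnegativeImproperIntegral.

Lemma Rpower_pos x y : 0 < Rpower x y.
Proof. apply exp_pos. Qed.

Lemma continuous_Rpower y u : 0 < u -> continuous (fun s => Rpower s y) u.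
Proof.
intros Hu; apply (ex_derive_continuous (K:=R_AbsRing) (V:=R_NormedModule)).
exists (y * Rpower u (y - 1)); apply is_derive_Reals, derivable_pt_lim_power, Hu.
Qed.

Definition gamma_kernel (al s : R) : R := Rpower s (al - 1) * exp (- s).

Lemma continuous_gamma_kernel al u : 0 < u -> continuous (gamma_kernel al) u.
Proof.
intros Hu; apply (continuous_mult (fun s => Rpower s (al - 1)) (fun s => exp (- s))).
- exact (continuous_Rpower _ u Hu).
- apply (ex_derive_continuous (K:=R_AbsRing) (V:=R_NormedModule)); auto_derive; auto.
Qed.

Lemma gamma_kernel_pos al s : 0 < gamma_kernel al s.
Proof. apply Rmult_lt_0_compat; [apply Rpower_pos|apply exp_pos]. Qed.

Lemma RInt_gamma_kernel_le_inv al a :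
  0 < al -> 0 < a -> a <= 1 -> RInt (gamma_kernel al) a 1 <= / al.
Proof.
intros Hal Ha Ha1.
assert (Hin : forall x, Rmin a 1 <= x <= Rmax a 1 -> 0 < x).
{ intros x Hx; rewrite Rmin_left in Hx by lra; lra. }
assert (Hprim : is_RInt (fun u => Rpower u (al - 1)) a 1
                  (minus (/ al * Rpower 1 al) (/ al * Rpower a al))).
{ apply (is_RInt_derive (fun u => / al * Rpower u al)).
  - intros x Hx; apply is_derive_Reals.
    replace (Rpower x (al - 1)) with (/ al * (al * Rpower x (al - 1))) by (field; lra).
    apply (derivable_pt_lim_scal (fun y => Rpower y al)), derivable_pt_lim_power, Hin, Hx.
  - intros x Hx; apply continuous_Rpower, Hin, Hx. }
apply Rle_trans with (RInt (fun u => Rpower u (al - 1)) a 1).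
- apply RInt_le; [exact Ha1| |eexists; exact Hprim|].
  + apply ex_RInt_continuous_pos; [exact (continuous_gamma_kernel al)|lra|lra].
  + intros x Hx; unfold gamma_kernel.
    rewrite <- (Rmult_1_r (Rpower x (al - 1))) at 2.
    apply Rmult_le_compat_l; [apply Rlt_le, Rpower_pos|].
    rewrite <- exp_0; apply Rlt_le, exp_increasing; lra.
- rewrite (is_RInt_unique _ _ _ _ Hprim); change (minus ?x ?y) with (x - y).
  unfold Rpower at 1; rewrite ln_1, Rmult_0_r, exp_0.
  pose proof (Rpower_pos a al); pose proof (Rinv_0_lt_compat al Hal); nra.
Qed.

(* [u^m <= m^m e^u] follows from [u/m <= e^(u/m)], raised to the power [m]. *)
Lemma gamma_kernel_le_inv_square al u :
  0 < al -> 1 <= u -> gamma_kernel al u <= Rpower (al + 1) (al + 1) / (u * u).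
Proof.
intros Hal Hu; set (m := al + 1); assert (Hm : 0 < m) by (unfold m; lra).
assert (Hpow : Rpower u (al - 1) = Rpower u m / (u * u)).
{ replace (al - 1) with (m + - (1 + 1)) by (unfold m; ring).
  rewrite Rpower_plus, Rpower_Ropp, Rpower_plus, Rpower_1 by lra; reflexivity. }
assert (Hexp : Rpower u m <= Rpower m m * exp u).
{ replace u with (u / m * m) at 1 by (field; lra).
  rewrite <- Rpower_mult_distr by (try apply Rdiv_lt_0_compat; lra).
  rewrite Rmult_comm; apply Rmult_le_compat_l; [apply Rlt_le, Rpower_pos|].
  apply Rle_trans with (Rpower (exp (u / m)) m).
  - apply Rle_Rpower_l; [lra|split; [apply Rdiv_lt_0_compat; lra|]].
    pose proof (exp_ineq1_le (u / m)); lra.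
  - unfold Rpower at 1; rewrite ln_exp; right; f_equal; field; lra. }
unfold gamma_kernel; rewrite Hpow.
assert (Hinv : exp u * exp (- u) = 1) by (rewrite <- exp_plus, Rplus_opp_r; apply exp_0).
pose proof (exp_pos (- u)).
assert (Huu : 0 < / (u * u)) by (apply Rinv_0_lt_compat; nra).
unfold Rdiv; apply Rle_trans with (Rpower m m * exp u * exp (- u) * / (u * u)).
- replace (Rpower u m * / (u * u) * exp (- u)) with (Rpower u m * exp (- u) * / (u * u)) by ring.
  apply Rmult_le_compat_r; [lra|apply Rmult_le_compat_r; lra].
- replace (Rpower m m * exp u * exp (- u)) with (Rpower m m * (exp u * exp (- u))) by ring.
  rewrite Hinv; lra.
Qed.

Lemma RInt_gamma_kernel_le_const al b :
  0 < al -> 1 <= b -> RInt (gamma_kernel al) 1 b <= Rpower (al + 1) (al + 1).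
Proof.
intros Hal Hb; set (K := Rpower (al + 1) (al + 1)).
assert (HK : 0 < K) by apply Rpower_pos.
assert (Hin : forall x, Rmin 1 b <= x <= Rmax 1 b -> 1 <= x).
{ intros x Hx; rewrite Rmin_left in Hx by lra; lra. }
assert (Hprim : is_RInt (fun u => K / (u * u)) 1 b (minus (- (K / b)) (- (K / 1)))).
{ apply (is_RInt_derive (fun u => - (K / u))).
  - intros x Hx; specialize (Hin x Hx); auto_derive; [lra|field; lra].
  - intros x Hx; specialize (Hin x Hx).
    apply (ex_derive_continuous (K:=R_AbsRing) (V:=R_NormedModule)); auto_derive; nra. }
apply Rle_trans with (RInt (fun u => K / (u * u)) 1 b).
- apply RInt_le; [exact Hb| |eexists; exact Hprim|].
  + apply ex_RInt_continuous_pos; [exact (continuous_gamma_kernel al)|lra|lra].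
  + intros x Hx; apply gamma_kernel_le_inv_square; lra.
- rewrite (is_RInt_unique _ _ _ _ Hprim); change (minus ?x ?y) with (x - y).
  assert (0 < K / b) by (apply Rdiv_lt_0_compat; lra).
  unfold Rdiv at 2; rewrite Rinv_1; lra.
Qed.

Lemma improper_RInt_Gamma al : 0 < al -> improper_RInt (gamma_kernel al) (Gamma al).
Proof.
intros Hal.
assert (Hcont := continuous_gamma_kernel al).
assert (Hge0 : forall u, 0 < u -> 0 <= gamma_kernel al u) by (intros; apply Rlt_le, gamma_kernel_pos).
assert (Hbound : forall a b, 0 < a -> a <= b ->
          RInt (gamma_kernel al) a b <= / al + Rpower (al + 1) (al + 1)).
{ intros a b Ha Hab.
  pose proof (Rmin_l a 1); pose proof (Rmin_r a 1); pose proof (Rmax_l b 1); pose proof (Rmax_r b 1).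
  assert (0 < Rmin a 1) by (apply Rmin_glb_lt; lra).
  eapply Rle_trans; [apply (RInt_le_superinterval _ Hcont Hge0 a b (Rmin a 1) (Rmax b 1)); lra|].
  rewrite <- (RInt_Chasles _ (Rmin a 1) 1 (Rmax b 1))
    by (apply ex_RInt_continuous_pos; [exact Hcont|lra|lra]).
  pose proof (RInt_gamma_kernel_le_inv al (Rmin a 1) Hal ltac:(lra) ltac:(lra)).
  pose proof (RInt_gamma_kernel_le_const al (Rmax b 1) Hal ltac:(lra)).
  change plus with Rplus; lra. }
destruct (improper_RInt_bounded _ Hcont Hge0 _ Hbound) as [l Hl].
apply improper_integralE; unfold Gamma; apply epsilon_spec.
exists l; apply improper_integralE; exact Hl.
Qed.

Definition scaled_power (c p s : R) : R := c * Rpower s p.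

(* The integrand of [int g(u) du] after the substitution [u = c s^p]. *)
Definition pullback_power (g : R -> R) (c p s : R) : R :=
  g (scaled_power c p s) * (c * Rabs p * Rpower s (p - 1)).

(* Coquelicot states integrand identities at the carrier of a normed module. *)
Ltac ring_in_R := match goal with |- ?x = ?y => change (@eq R x y); ring end.

Section ScaledPower.

Variables c p : R.
Hypothesis c_pos : 0 < c.

Lemma scaled_power_pos s : 0 < scaled_power c p s.
Proof. apply Rmult_lt_0_compat; [exact c_pos|apply Rpower_pos]. Qed.

Lemma scaled_power_preimage y :
  p <> 0 -> 0 < y -> scaled_power c p (Rpower (y / c) (/ p)) = y.
Proof.
intros Hp Hy; unfold scaled_power.
rewrite Rpower_mult, Rinv_l, Rpower_1 by (auto; apply Rdiv_lt_0_compat; assumption).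
field; lra.
Qed.

Lemma scaled_power_increasing a b :
  0 < p -> 0 < a -> a < b -> scaled_power c p a < scaled_power c p b.
Proof.
intros Hp Ha Hab; apply Rmult_lt_compat_l; [exact c_pos|].
apply Rlt_Rpower_l; [exact Hp|lra].
Qed.

Lemma scaled_power_decreasing a b :
  p < 0 -> 0 < a -> a < b -> scaled_power c p b < scaled_power c p a.
Proof.
intros Hp Ha Hab; apply Rmult_lt_compat_l; [exact c_pos|].
assert (Hinv : forall x, Rpower x p = / Rpower x (- p))
  by (intros x; rewrite <- Rpower_Ropp, Ropp_involutive; reflexivity).
rewrite !Hinv.
apply Rinv_lt_contravar; [apply Rmult_lt_0_compat; apply Rpower_pos|].
apply Rlt_Rpower_l; lra.
Qed.

Variable g : R -> R.
Hypothesis g_cont : forall u, 0 < u -> continuous g u.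

Lemma is_RInt_comp_scaled_power a b : 0 < a -> 0 < b ->
  is_RInt (fun s => scal (c * (p * Rpower s (p - 1))) (g (scaled_power c p s))) a b
    (RInt g (scaled_power c p a) (scaled_power c p b)).
Proof.
intros Ha Hb.
apply (is_RInt_comp g (scaled_power c p) (fun s => c * (p * Rpower s (p - 1)))).
- intros x _; apply g_cont, scaled_power_pos.
- intros x Hx.
  assert (Hx0 : 0 < x) by (apply Rlt_le_trans with (Rmin a b); [apply Rmin_glb_lt|apply Hx]; lra).
  split.
  + apply is_derive_Reals, (derivable_pt_lim_scal (fun s => Rpower s p)).
    exact (derivable_pt_lim_power x p Hx0).
  + apply (continuous_mult (fun _ => c)); [apply continuous_const|].
    apply (continuous_mult (fun _ => p)); [apply continuous_const|].
    exact (continuous_Rpower _ x Hx0).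
Qed.

Lemma is_RInt_pullback_power_pos a b : 0 < p -> 0 < a -> 0 < b ->
  is_RInt (pullback_power g c p) a b (RInt g (scaled_power c p a) (scaled_power c p b)).
Proof.
intros Hp Ha Hb.
apply (is_RInt_ext (fun s => scal (c * (p * Rpower s (p - 1))) (g (scaled_power c p s))));
  [|exact (is_RInt_comp_scaled_power a b Ha Hb)].
intros s _; unfold pullback_power; rewrite Rabs_right by lra.
change scal with Rmult; ring_in_R.
Qed.

Lemma is_RInt_pullback_power_neg a b : p < 0 -> 0 < a -> 0 < b ->
  is_RInt (pullback_power g c p) a b (RInt g (scaled_power c p b) (scaled_power c p a)).
Proof.
intros Hp Ha Hb.
rewrite <- opp_RInt_swap
  by (apply ex_RInt_continuous_pos; [exact g_cont|apply scaled_power_pos..]).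
apply (is_RInt_ext (fun s => opp (scal (c * (p * Rpower s (p - 1))) (g (scaled_power c p s)))));
  [|exact (is_RInt_opp _ _ _ _ (is_RInt_comp_scaled_power a b Ha Hb))].
intros s _; unfold pullback_power; rewrite Rabs_left by lra.
change scal with Rmult; change opp with Ropp; ring_in_R.
Qed.

Lemma improper_RInt_pullback_power L :
  p <> 0 -> improper_RInt g L -> improper_RInt (pullback_power g c p) L.
Proof.
intros Hp [Hex Hlim].
set (pre y := Rpower (y / c) (/ p)).
assert (Hpre : forall y, 0 < y -> scaled_power c p (pre y) = y)
  by (intros y Hy; exact (scaled_power_preimage y Hp Hy)).
split.
- intros a b Ha Hab; destruct (Rlt_or_le 0 p) as [Hp0|Hp0]; eexists.
  + apply is_RInt_pullback_power_pos; lra.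
  + apply is_RInt_pullback_power_neg; lra.
- intros eps Heps; destruct (Hlim eps Heps) as [d [Hd [M [HdM H]]]].
  destruct (Rlt_or_le 0 p) as [Hp0|Hp0].
  + exists (pre d); split; [apply Rpower_pos|]; exists (pre M); split.
    { apply Rnot_lt_le; intros Hlt.
      pose proof (scaled_power_increasing (pre M) (pre d) Hp0 (Rpower_pos _ _) Hlt) as Hinc.
      rewrite !Hpre in Hinc; lra. }
    intros a b Ha Had HMb; assert (0 < pre M) by apply Rpower_pos.
    rewrite (is_RInt_unique _ _ _ _ (is_RInt_pullback_power_pos a b Hp0 Ha ltac:(lra))).
    apply H; [apply scaled_power_pos| |].
    * rewrite <- (Hpre d Hd); apply scaled_power_increasing; assumption.
    * rewrite <- (Hpre M ltac:(lra)); apply scaled_power_increasing; [assumption|apply Rpower_pos|assumption].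
  + assert (Hn : p < 0) by lra.
    exists (pre M); split; [apply Rpower_pos|]; exists (pre d); split.
    { apply Rnot_lt_le; intros Hlt.
      pose proof (scaled_power_decreasing (pre d) (pre M) Hn (Rpower_pos _ _) Hlt) as Hdec.
      rewrite !Hpre in Hdec; lra. }
    intros a b Ha Had HMb; assert (0 < pre d) by apply Rpower_pos.
    rewrite (is_RInt_unique _ _ _ _ (is_RInt_pullback_power_neg a b Hn Ha ltac:(lra))).
    apply H; [apply scaled_power_pos| |].
    * rewrite <- (Hpre d Hd); apply scaled_power_decreasing; [assumption|apply Rpower_pos|assumption].
    * rewrite <- (Hpre M ltac:(lra)); apply scaled_power_decreasing; assumption.
Qed.

End ScaledPower.

(* [Gdens] and [Gdens_neg] without the factor [1 / Gamma mu], so that the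
   identities below only involve quantities known to be positive. *)
Definition Gkernel (gamma mu x t : R) : R :=
  gamma * Rpower (x / t) (mu * gamma - 1) * exp (- Rpower (x / t) gamma) / t.

Definition Gkernel_neg (gamma mu x t : R) : R :=
  gamma * Rpower (x / t) (- mu * gamma - 1) * exp (- Rpower (x / t) (- gamma)) / t.

Definition q_kernel (gamma mu1 mu2 x t : R) : R :=
  gamma * (Rpower x (gamma * mu1 - 1) * Rpower t (gamma * mu2)
           / Rpower (Rpower x gamma + Rpower t gamma) (mu1 + mu2)).

Lemma Gdens_Gkernel gamma mu x t : Gdens gamma mu x t = Gkernel gamma mu x t / Gamma mu.
Proof. unfold Gdens, Gkernel, Rdiv; rewrite Rinv_mult; ring. Qed.

Lemma Gdens_neg_Gkernel_neg gamma mu x t :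
  Gdens_neg gamma mu x t = Gkernel_neg gamma mu x t / Gamma mu.
Proof. unfold Gdens_neg, Gkernel_neg, Rdiv; rewrite Rinv_mult; ring. Qed.

Lemma q_dens_q_kernel gamma mu1 mu2 x t :
  q_dens gamma mu1 mu2 x t
  = q_kernel gamma mu1 mu2 x t / (Gamma mu1 * Gamma mu2) * Gamma (mu1 + mu2).
Proof. unfold q_dens, q_kernel, Rdiv; ring. Qed.

Lemma improper_integral_q_dens gamma mu1 mu2 x t c p (f : R -> R) :
  0 < mu1 + mu2 -> 0 < c -> p <> 0 ->
  (forall s, 0 < s -> f s = q_kernel gamma mu1 mu2 x t
                            * pullback_power (gamma_kernel (mu1 + mu2)) c p s
                            / (Gamma mu1 * Gamma mu2)) ->
  improper_integral f (q_dens gamma mu1 mu2 x t).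
Proof.
intros Hmu Hc Hp Hf; apply improper_integralE; rewrite q_dens_q_kernel.
apply improper_RInt_ext with (2 := improper_RInt_scal _ _ _
  (improper_RInt_pullback_power c p Hc _ (continuous_gamma_kernel _) _ Hp (improper_RInt_Gamma _ Hmu))).
intros s Hs; rewrite Hf by exact Hs; unfold Rdiv; ring.
Qed.

Ltac positivity := repeat match goal with
 | |- 0 < _ * _ => apply Rmult_lt_0_compat
 | |- 0 < / _ => apply Rinv_0_lt_compat
 | |- 0 < _ / _ => apply Rdiv_lt_0_compat
 | |- 0 < _ + _ => apply Rplus_lt_0_compat
 | |- 0 < exp _ => apply exp_pos
 | |- 0 < Rpower _ _ => apply Rpower_pos
 | _ => assumption
end.

Ltac expand_ln := repeat first [ rewrite ln_mult by positivity | rewrite ln_Rinv by positivity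
  | rewrite ln_div by positivity | rewrite ln_exp | rewrite ln_Rpower ].

Lemma Rpower_div x s y : 0 < x -> 0 < s -> Rpower (x / s) y = Rpower x y * Rpower s (- y).
Proof.
intros Hx Hs; unfold Rdiv; rewrite <- Rpower_mult_distr by positivity.
f_equal; unfold Rpower; rewrite ln_Rinv by assumption; f_equal; ring.
Qed.

(* Both sides are positive, so it suffices to compare logarithms once the two
   exponentials are merged into [exp (- c s^p)]. *)
Section Integrands.

Variables gamma x t s : R.
Hypotheses (gamma_pos : 0 < gamma) (x_pos : 0 < x) (t_pos : 0 < t) (s_pos : 0 < s).

Lemma Gkernel_mul_Gkernel_neg mu1 mu2 :
  Gkernel gamma mu1 x s * Gkernel_neg gamma mu2 s t
  = q_kernel gamma mu1 mu2 x t
    * pullback_power (gamma_kernel (mu1 + mu2)) (Rpower x gamma + Rpower t gamma) (- gamma) s.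
Proof.
unfold Gkernel, Gkernel_neg, q_kernel, pullback_power, scaled_power, gamma_kernel.
rewrite Rabs_Ropp, Rabs_right by lra.
assert (- Rpower (x / s) gamma + - Rpower (s / t) (- gamma)
        = - ((Rpower x gamma + Rpower t gamma) * Rpower s (- gamma))).
{ rewrite !Rpower_div by assumption; rewrite Ropp_involutive; ring. }
apply ln_inv; [positivity|positivity|]; expand_ln; lra.
Qed.

Lemma Gkernel_mul_Gkernel_neg_sqrt mu1 mu2 :
  Gkernel gamma mu1 (x / s) (sqrt t) * Gkernel_neg gamma mu2 s (sqrt t) / s
  = q_kernel gamma mu1 mu2 x t
    * pullback_power (gamma_kernel (mu1 + mu2))
        (Rpower t (- (gamma / 2)) * (Rpower x gamma + Rpower t gamma)) (- gamma) s.
Proof.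
unfold Gkernel, Gkernel_neg, q_kernel, pullback_power, scaled_power, gamma_kernel.
rewrite Rabs_Ropp, Rabs_right, <- (Rpower_sqrt t) by lra.
assert (- Rpower (x / s / Rpower t (/ 2)) gamma + - Rpower (s / Rpower t (/ 2)) (- gamma)
        = - (Rpower t (- (gamma / 2)) * (Rpower x gamma + Rpower t gamma) * Rpower s (- gamma))).
{ rewrite !Rpower_div by positivity; rewrite Ropp_involutive, !Rpower_mult.
  replace (/ 2 * - gamma) with (- (gamma / 2)) by field.
  replace (Rpower t (/ 2 * gamma)) with (Rpower t (- (gamma / 2)) * Rpower t gamma)
    by (rewrite <- Rpower_plus; f_equal; field).
  ring. }
apply ln_inv; [positivity|positivity|]; expand_ln; lra.
Qed.

Lemma Gkernel_neg_mul_Gkernel mu1 mu2 :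
  Gkernel_neg gamma mu1 x s * Gkernel gamma mu2 s t
  = q_kernel gamma mu2 mu1 x t
    * pullback_power (gamma_kernel (mu2 + mu1))
        (Rpower x (- gamma) * Rpower t (- gamma) * (Rpower x gamma + Rpower t gamma)) gamma s.
Proof.
unfold Gkernel, Gkernel_neg, q_kernel, pullback_power, scaled_power, gamma_kernel.
rewrite Rabs_right by lra.
assert (- Rpower (x / s) (- gamma) + - Rpower (s / t) gamma
        = - (Rpower x (- gamma) * Rpower t (- gamma) * (Rpower x gamma + Rpower t gamma)
             * Rpower s gamma)).
{ rewrite !Rpower_div by positivity; rewrite Ropp_involutive, !Rpower_Ropp.
  pose proof (Rpower_pos x gamma); pose proof (Rpower_pos t gamma).
  field; lra. }
apply ln_inv; [positivity|positivity|]; expand_ln; lra.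
Qed.

End Integrands.

Theorem mainTheorem4 (gamma mu1 mu2 : R) :
  0 < gamma -> 0 < mu1 -> 0 < mu2 ->
  forall t : R, 0 < t ->
  (forall x : R, 0 < x ->
     improper_integral (fun s => Gdens gamma mu1 x s * Gdens_neg gamma mu2 s t)
       (q_dens gamma mu1 mu2 x t)) /\
  (forall x : R, 0 < x ->
     improper_integral
       (fun s => Gdens gamma mu1 (x / s) (sqrt t) * Gdens_neg gamma mu2 s (sqrt t) / s)
       (q_dens gamma mu1 mu2 x t)) /\
  (forall mu : R, 0 < mu ->
   forall x : R, 0 < x ->
     improper_integral (fun s => Gdens_neg gamma mu x s * Gdens gamma mu s t)
       (q_dens gamma mu mu x t)).
Proof.
intros Hg Hmu1 Hmu2 t Ht; split; [|split].
- intros x Hx; apply (improper_integral_q_dens _ _ _ _ _ (Rpower x gamma + Rpower t gamma) (- gamma));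
    [lra|positivity|lra|].
  intros s Hs; rewrite <- Gkernel_mul_Gkernel_neg, Gdens_Gkernel, Gdens_neg_Gkernel_neg by assumption.
  unfold Rdiv; rewrite Rinv_mult; ring.
- intros x Hx.
  apply (improper_integral_q_dens _ _ _ _ _
           (Rpower t (- (gamma / 2)) * (Rpower x gamma + Rpower t gamma)) (- gamma)); [lra|positivity|lra|].
  intros s Hs; rewrite <- Gkernel_mul_Gkernel_neg_sqrt, Gdens_Gkernel, Gdens_neg_Gkernel_neg by assumption.
  unfold Rdiv; rewrite Rinv_mult; ring.
- intros mu Hmu x Hx.
  apply (improper_integral_q_dens _ _ _ _ _
           (Rpower x (- gamma) * Rpower t (- gamma) * (Rpower x gamma + Rpower t gamma)) gamma);
    [lra|positivity|lra|].
  intros s Hs; rewrite <- Gkernel_neg_mul_Gkernel, Gdens_Gkernel, Gdens_neg_Gkernel_neg by assumption.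
  unfold Rdiv; rewrite Rinv_mult; ring.
Qed.
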